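(* Let $n\ge1$, $K\ge1$ and $p_n\in[0,1]$. Let $(\mathcal{G}(n),\mathcal{A}_1(n),\dots,\mathcal{A}_K(n))$ be the output of the Tetris exploration algorithm, and let $\mathcal{N}_i(n)=\{v:h_v(n)=i\}$ be the sets of vertices at height $i$ in the final state of the Tetris model on $G(n,p_n)$ (both described in the context). Then the joint distribution of $(\mathcal{G}(n),\mathcal{A}_1(n),\dots,\mathcal{A}_K(n))$ is identical to that of $(G(n,p_n),\mathcal{N}_1(n),\dots,\mathcal{N}_K(n))$.
   Context: $G(n,p_n)$ is the Erdős–Rényi random graph on $[n]$ with independent edge probability $p_n$. Tetris model: given a realization of $G(n,p_n)$, set $h_v(0)=0$ for all $v$. At step $t+1$ a vertex $u$ is chosen uniformly at random among vertices not selected before; letting $m=\max\{h_w(t):w \text{ a neighbour of } u\}$ (with $m=0$ if $u$ has no neighbours), set $h_u(t+1)=m+1$ if $m<K$ and $h_u(t+1)=0$ otherwise; all other heights are unchanged. Tetris exploration algorithm: maintain $\mathcal{A}_k(t)$ (explored vertices at height $k$, $0\le k\le K$; height 0 meaning frozen) and unexplored set $\mathcal{U}(t)$, initially $\mathcal{A}_k(0)=\varnothing$, $\mathcal{U}(0)=[n]$; $\mathcal{A}(t)=\bigcup_{k=0}^K\mathcal{A}_k(t)$. At step $t+1$, select $v\in\mathcal{U}(t)$ uniformly at random, remove it from $\mathcal{U}$, and join it to each vertex of $\mathcal{A}(t)$ independently with probability $p_n$. Let $j$ be the maximal height among the vertices of $\mathcal{A}(t)$ joined to $v$ ($j=0$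 if none). If $j\le K-1$, $v$ receives height $j+1$ (joins $\mathcal{A}_{j+1}$); otherwise $v$ receives height $0$ (joins $\mathcal{A}_0$). After $n$ steps the algorithm outputs $(\mathcal{A}_1(n),\dots,\mathcal{A}_K(n))$ and the graph $\mathcal{G}(n)$ on $[n]$ of all edges added. *)

(* Discrete probability: distributions are given by their
   probability mass functions on finite outcome types. *)
From HB Require Import structures.
From mathcomp Require Import all_boot all_order all_algebra.
From mathcomp Require Import reals.
Set Implicit Arguments. Unset Strict Implicit. Unset Printing Implicit Defensive.
Import Order.TTheory GRing.Theory Num.Theory.
Local Open Scope ring_scope.

Section Tetris.
Variables (R : realType) (n K : nat) (p : R).

(* vertices: 'I_n ; heights: 'I_K.+1 (height 0 = frozen / not yet placed) *)
Definition heights := {ffun 'I_n -> 'I_K.+1}.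
Definition h0 : heights := [ffun=> ord0].

(* a simple graph on [n] is a set of 2-element subsets of [n] *)
Definition pairs : {set {set 'I_n}} := [set e : {set 'I_n} | #|e| == 2%N].
Definition graph := {set {set 'I_n}}.

(* outcome: (graph, (set of vertices at height i)_{i=1..K}); index i : 'I_K
   stands for height i+1 *)
Definition outcome := (graph * {ffun 'I_K -> {set 'I_n}})%type.
Definition level_sets (h : heights) : {ffun 'I_K -> {set 'I_n}} :=
  [ffun i : 'I_K => [set v | (h v : nat) == i.+1]].

Definition gnp_pmf (E : graph) : R :=
  if E \subset pairs then \prod_(e in pairs) (if e \in E then p else 1 - p)
  else 0.

Definition new_height (m : nat) : 'I_K.+1 :=
  if (m < K)%N then inord m.+1 else ord0.

Definition tet_update (E : graph) (h : heights) (u : 'I_n) : heights :=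
  let m := (\max_(w | [set u; w] \in E) (h w : nat))%N in
  [ffun v => if v == u then new_height m else h v].

(* probability, starting from unselected set U and heights h, with k steps
   remaining, that the final level sets equal A *)
Fixpoint tet_run (E : graph) (k : nat) (U : {set 'I_n}) (h : heights)
    (A : {ffun 'I_K -> {set 'I_n}}) : R :=
  match k with
  | 0 => ((level_sets h == A) : nat)%:R
  | k'.+1 => \sum_(u in U) (#|U|%:R)^-1 * tet_run E k' (U :\ u) (tet_update E h u) A
  end.

Definition tetris_pmf (o : outcome) : R :=
  gnp_pmf o.1 * tet_run o.1 n setT h0 o.2.

(* state: unexplored set U, heights h of explored vertices (explored set is
   ~: U, A_k(t) = explored vertices of height k), edges E added so far. *)
Fixpoint alg_run (k : nat) (U : {set 'I_n}) (h : heights) (E : graph)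
    (o : outcome) : R :=
  match k with
  | 0 => (((E, level_sets h) == o) : nat)%:R
  | k'.+1 =>
      \sum_(v in U) (#|U|%:R)^-1 *
        \sum_(S : {set 'I_n} | S \subset ~: U)
          p ^+ #|S| * (1 - p) ^+ (#|~: U| - #|S|) *
          alg_run k' (U :\ v)
            [ffun w => if w == v then new_height (\max_(x in S) (h x : nat))%N
                       else h w]
            (E :|: [set [set v; w] | w in S]) o
  end.

Definition alg_pmf (o : outcome) : R := alg_run n setT h0 set0 o.

End Tetris.

From HB Require Import structures.
From mathcomp Require Import all_boot all_order all_algebra.
From mathcomp Require Import reals.
Set Implicit Arguments. Unset Strict Implicit. Unset Printing Implicit Defensive.
Import Order.TTheory GRing.Theory Num.Theory.
Local Open Scope ring_scope.

(* Fix the final graph E.  In a state of the algorithm with unexplored set U,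
   edges E0 among the explored vertices and heights vanishing on U, the only
   choice of the random neighbourhood S of the newly explored vertex v that can
   still lead to E is S = the explored E-neighbours of v, and its probability is
   exactly the G(n,p) weight of the pairs from v to the explored vertices.
   Moreover, as unexplored vertices have height 0, the new height of v computed
   from S is the one the Tetris model computes from all E-neighbours of v.
   By induction on |U| the probability of the output (E, A) thus factors as
   [E agrees with E0 on explored pairs] * (G(n,p) weight of the pairs meeting U)
   * (Tetris probability of A on E from the same state); from the initial state
   this is gnp_pmf E * tet_run E. *)

Section ExploredPairs.
Variable n : nat.
Local Notation V := 'I_n.

Definition explored_pairs (U : {set V}) : {set {set V}} :=
  [set e in pairs n | e \subset ~: U].

Definition star (v : V) (S : {set V}) : {set {set V}} := [set [set v; w] | w in S].

Lemma set2_inj (v : V) : injective (fun w : V => [set v; w]).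
Proof.
move=> w1 w2 /= e12.
have : w1 \in [set v; w2] by rewrite -e12 !inE eqxx orbT.
rewrite !inE => /orP [/eqP w1v|/eqP //].
have : w2 \in [set v; w1] by rewrite e12 !inE eqxx orbT.
by rewrite !inE w1v orbb => /eqP ->.
Qed.

Lemma mem_star (v w : V) (S : {set V}) : ([set v; w] \in star v S) = (w \in S).
Proof. by apply/imsetP/idP => [[w' w'S /set2_inj ->] | wS] //; exists w. Qed.

Lemma explored_pairsD1 (U : {set V}) (v : V) (e : {set V}) :
  e \in explored_pairs U -> e \in explored_pairs (U :\ v).
Proof.
rewrite !inE => /andP [-> /subsetP eU] /=; apply/subsetP => x /eU.
by rewrite !inE negb_and => ->; rewrite orbT.
Qed.

Lemma star_explored_pairs (U : {set V}) (v w : V) : v \in U -> w \in ~: U ->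
  [set v; w] \in explored_pairs (U :\ v) /\ [set v; w] \notin explored_pairs U.
Proof.
move=> vU; rewrite inE => wU.
have vw : v != w by apply: contraNneq wU => <-.
split; first by rewrite !inE cards2 vw /= subUset !sub1set !inE eqxx (negbTE wU) andbF.
rewrite inE negb_and; apply/orP; right; apply/negP => /subsetP /(_ v).
by rewrite !inE eqxx vU => /(_ isT).
Qed.

Lemma explored_pairsD1_star (U : {set V}) (v : V) (e : {set V}) :
  e \in explored_pairs (U :\ v) -> e \notin explored_pairs U ->
  exists2 w, w \in ~: U & e = [set v; w].
Proof.
rewrite !inE => /andP [/cards2P [x [y [xy ->]]] sub].
rewrite cards2 xy /= => nsub.
move: sub; rewrite subUset !sub1set !inE !negb_and !negbK => /andP [hx hy].
have [xU|xU] := boolP (x \in U); last first.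
  have [yU|yU] := boolP (y \in U); last by move: nsub; rewrite subUset !sub1set !inE xU yU.
  move: hy; rewrite yU orbF => /eqP yv.
  by exists x; rewrite ?inE // yv setUC.
move: hx; rewrite xU orbF => /eqP xv.
exists y; last by rewrite xv.
rewrite inE; apply/negP => yU; move: hy; rewrite yU orbF => /eqP yv.
by move: xy; rewrite xv yv eqxx.
Qed.

Lemma explored_pairsT : explored_pairs [set: V] = set0.
Proof.
apply/setP => e; rewrite !inE setCT subset0.
by apply/negP => /andP [/eqP e2 /eqP e0]; rewrite e0 cards0 in e2.
Qed.

Lemma explored_pairs0 : explored_pairs set0 = pairs n.
Proof. by apply/setP => e; rewrite !inE setC0 subsetT andbT. Qed.

End ExploredPairs.

Section Exploration.
Variables (R : realType) (n K : nat) (p : R).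
Local Notation V := 'I_n.

Definition pattern_prob (E : graph n) (D : {set {set V}}) : R :=
  \prod_(e in D) (if e \in E then p else 1 - p).

Definition explored_nbhd (E : graph n) (U : {set V}) (v : V) : {set V} :=
  [set w in ~: U | [set v; w] \in E].

Lemma gnp_pmfE (E : graph n) :
  gnp_pmf p E = (E \subset pairs n)%:R * pattern_prob E (pairs n).
Proof. by rewrite /gnp_pmf; case: (E \subset pairs n); rewrite ?mul1r ?mul0r. Qed.

Lemma explore_edgesE (U : {set V}) (v : V) (S : {set V}) (E0 E : graph n) :
  v \in U -> S \subset ~: U -> E0 \subset explored_pairs U ->
  (E :&: explored_pairs (U :\ v) == E0 :|: star v S) =
  (E :&: explored_pairs U == E0) && (S == explored_nbhd E U v).
Proof.
move=> vU SU /subsetP E0U.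
have starU e : e \in star v S -> e \notin explored_pairs U.
  by case/imsetP => w wS ->; case: (star_explored_pairs vU (subsetP SU w wS)).
have E0F e : e \notin explored_pairs U -> (e \in E0) = false.
  by move=> eU; apply: contraNF eU => /E0U.
have oldE e : e \in explored_pairs U ->
    (e \in E0 :|: star v S) = (e \in E0).
  by move=> eU; rewrite in_setU; case: (boolP (e \in star v S)) => [/starU|];
    rewrite ?eU ?orbF.
apply/eqP/andP => [/setP EE0 | [/eqP/setP EU /eqP SN]]; first split.
- apply/eqP/setP => e; rewrite inE.
  case eU: (e \in explored_pairs U); last by rewrite andbF E0F ?eU.
  by rewrite -oldE // -EE0 inE explored_pairsD1.
- apply/eqP/setP => w; rewrite inE.
  have [wU|wU] /= := boolP (w \in ~: U); last first.
    by apply: contraNF wU => /(subsetP SU).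
  have [newp oldp] := star_explored_pairs vU wU.
  by move: (EE0 [set v; w]); rewrite in_setI in_setU newp andbT E0F // mem_star => ->.
apply/setP => e; rewrite in_setI in_setU.
case eU: (e \in explored_pairs U).
  by rewrite explored_pairsD1 // andbT -in_setU oldE // -EU inE eU andbT.
rewrite E0F ?eU //=.
case eU': (e \in explored_pairs (U :\ v)); last first.
  rewrite andbF; apply/esym/imsetP => -[w wS ew].
  by case: (star_explored_pairs vU (subsetP SU w wS)); rewrite -ew eU'.
have [w wU ->] := explored_pairsD1_star eU' (negbT eU).
by rewrite andbT mem_star SN inE wU.
Qed.

Lemma pattern_prob_explore (U : {set V}) (v : V) (E : graph n) : v \in U ->
  pattern_prob E (pairs n :\: explored_pairs U) =
  pattern_prob E (pairs n :\: explored_pairs (U :\ v)) *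
  pattern_prob E (star v (~: U)).
Proof.
move=> vU; rewrite /pattern_prob (bigID (mem (explored_pairs (U :\ v)))) /= mulrC.
congr (_ * _); apply: eq_bigl => e; rewrite !in_setD.
  have [eU'|eU'] /= := boolP (e \in explored_pairs (U :\ v)); first by rewrite andbF.
  by rewrite andbT andb_idl // => _; apply: contraNN eU'; apply: explored_pairsD1.
apply/idP/idP => [/andP [/andP [eU _] eU'] | /imsetP [w wU ->]].
  by have [w wU ->] := explored_pairsD1_star eU' eU; rewrite mem_star.
have [newp oldp] := star_explored_pairs vU wU.
by rewrite newp oldp andbT; move: newp; rewrite inE => /andP [].
Qed.

Lemma pattern_prob_star (U : {set V}) (v : V) (E : graph n) :
  pattern_prob E (star v (~: U)) =
  p ^+ #|explored_nbhd E U v| * (1 - p) ^+ (#|~: U| - #|explored_nbhd E U v|).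
Proof.
rewrite /pattern_prob big_imset /=; last by move=> x y _ _; apply: set2_inj.
rewrite (bigID (fun w => [set v; w] \in E)) /=.
rewrite (eq_bigr (fun _ => p)); last by move=> w /andP [_ ->].
rewrite [X in _ * X](eq_bigr (fun _ => 1 - p)); last by move=> w /andP [_ /negbTE ->].
rewrite !prodr_const.
have cardN : #|explored_nbhd E U v| = #|[pred w in ~: U | [set v; w] \in E]|.
  by apply: eq_card => w; rewrite !inE.
have := cardID [pred w | [set v; w] \in E] (~: U).
rewrite -cardN => <-; rewrite addKn.
by congr (_ * _); congr (_ ^+ _); apply: eq_card => w; rewrite !inE unfold_in /= inE andbC.
Qed.

Lemma explore_heightsE (U : {set V}) (v : V) (E : graph n) (h : heights n K) :
  {in U, forall w, h w = ord0} ->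
  [ffun w => if w == v then
     new_height K (\max_(x in explored_nbhd E U v) (h x : nat))%N else h w]
  = tet_update E h v.
Proof.
move=> hU; apply/ffunP => w; rewrite !ffunE.
case: ifP => // _; congr new_height.
rewrite big_mkcond [RHS]big_mkcond; apply: eq_bigr => x _; rewrite !inE.
by case: (boolP (x \in U)) => [xU|] //=; rewrite hU //; case: ifP.
Qed.

Lemma alg_run_done (h : heights n K) (E0 E : graph n) A :
  E0 \subset pairs n ->
  alg_run p 0 set0 h E0 (E, A) =
  ((E \subset pairs n) && (E :&: explored_pairs set0 == E0))%:R *
  pattern_prob E (pairs n :\: explored_pairs set0) * tet_run R E 0 set0 h A.
Proof.
move=> E0pairs; rewrite explored_pairs0 setDv /pattern_prob big_set0 mulr1 /=.
rewrite xpair_eqE.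
have -> : (E0 == E) = (E \subset pairs n) && (E :&: pairs n == E0).
  apply/eqP/andP => [<- | [/setIidPl -> /eqP //]].
  by split; last apply/eqP/setIidPl.
by rewrite -natrM mulnb.
Qed.

Lemma alg_run_factor (k : nat) (U : {set V}) (h : heights n K) (E0 E : graph n) A :
  #|U| = k -> {in U, forall w, h w = ord0} -> E0 \subset explored_pairs U ->
  alg_run p k U h E0 (E, A) =
  ((E \subset pairs n) && (E :&: explored_pairs U == E0))%:R *
  pattern_prob E (pairs n :\: explored_pairs U) * tet_run R E k U h A.
Proof.
elim: k U h E0 => [|k IH] U h E0 cardU hU E0U.
  move/eqP: cardU; rewrite cards_eq0 => /eqP U0; rewrite U0 in E0U *.
  by apply: alg_run_done; rewrite -(explored_pairs0 n).
rewrite /= mulr_sumr; apply: eq_bigr => v vU; rewrite mulrCA; congr (_ * _).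
set N := explored_nbhd E U v.
set c := (E \subset pairs n) && (E :&: explored_pairs U == E0).
have summandE (S : {set V}) : S \subset ~: U ->
  p ^+ #|S| * (1 - p) ^+ (#|~: U| - #|S|) *
  alg_run p k (U :\ v)
    [ffun w => if w == v then new_height K (\max_(x in S) (h x : nat))%N else h w]
    (E0 :|: star v S) (E, A) =
  (S == N)%:R * (c%:R * pattern_prob E (pairs n :\: explored_pairs U) *
     tet_run R E k (U :\ v) (tet_update E h v) A).
  move=> SU; rewrite IH; first last.
  - rewrite subUset; apply/andP; split.
      by apply/subsetP => e /(subsetP E0U) /(explored_pairsD1 v).
    apply/subsetP => e /imsetP [w wS ->].
    by case: (star_explored_pairs vU (subsetP SU w wS)).
  - by move=> w /setD1P [wv wU]; rewrite ffunE (negbTE wv) hU.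
  - by move: cardU; rewrite (cardsD1 v) vU => -[].
  rewrite (explore_edgesE E vU SU E0U).
  have [->|_] := eqVneq S N; last by rewrite !andbF /= !(mulr0, mul0r).
  rewrite !andbT mul1r (explore_heightsE v E hU) (pattern_prob_explore E vU).
  rewrite pattern_prob_star -/N -/c.
  by rewrite mulrA; congr (_ * _); rewrite mulrCA; congr (_ * _); apply: mulrC.
rewrite (eq_bigr _ summandE) (bigD1 N) /=; last first.
  by apply/subsetP => w; rewrite inE => /andP [].
by rewrite eqxx mul1r big1 ?addr0 // => S /andP [_ /negbTE ->]; rewrite mul0r.
Qed.

End Exploration.

Theorem proposition2 (R : realType) (n K : nat) (p : R) :
  (1 <= n)%N -> (1 <= K)%N -> 0 <= p <= 1 ->
  forall o : outcome n K, @alg_pmf R n K p o = @tetris_pmf R n K p o.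
Proof.
(* The identity is polynomial in p. *)
move=> _ _ _ [E A]; rewrite /alg_pmf /tetris_pmf /=.
rewrite (@alg_run_factor R n K p n setT) ?cardsT ?card_ord ?sub0set //; last first.
  by move=> w _; rewrite ffunE.
by rewrite explored_pairsT setI0 eqxx andbT setD0 gnp_pmfE.
Qed.
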